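(* Let $\mathbb{K}$ be a field and $\alpha\in\mathbb{K}^*$. For $n$ even, $X_n(\alpha)$ is smooth. For $n$ odd and $\alpha\neq(-1)^{(n+1)/2}$, $X_n(\alpha)$ is smooth. For $n$ odd and $\alpha=(-1)^{(n+1)/2}$, $X_n(\alpha)$ has a unique singular point, namely $x_i=x'_i=0$ for odd $i$ and $x_i=x'_i=-(-1)^{(n+i-1)/2}$ for even $i$.
   Context: For $\alpha$ invertible and $n\ge1$, $X_n(\alpha)$ is the affine variety over $\mathbb{K}$ in variables $x_1,\dots,x_n,x'_1,\dots,x'_n$ defined by $x_1x'_1=1+\alpha x_2$, $x_ix'_i=1+x_{i-1}x_{i+1}$ for $2\le i\le n-1$, $x_nx'_n=1+x_{n-1}$ (for $n=1$: $x_1x'_1=1+\alpha$); $X_0(\alpha)$ is a point. *)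

From HB Require Import structures.
From mathcomp Require Import all_boot all_order all_algebra.
From mathcomp Require Import mpoly.
Set Implicit Arguments. Unset Strict Implicit. Unset Printing Implicit Defensive.
Import Order.TTheory GRing.Theory.
Local Open Scope ring_scope.

(* Variables of X_n(alpha): the polynomial ring K[x_1..x_n, x'_1..x'_n] is
   {mpoly K[n + n]}; the variable x_{k+1} is 'X_(lshift n k) and x'_{k+1} is
   'X_(rshift n k)  (0-based index k < n). *)
Definition xvar (K : nzRingType) (n : nat) (k : nat) : {mpoly K[n + n]} :=
  if @insub nat (fun m => (m < n)%N) 'I_n k is Some j then 'X_(lshift n j) else 0.
Definition xpvar (K : nzRingType) (n : nat) (k : nat) : {mpoly K[n + n]} :=
  if @insub nat (fun m => (m < n)%N) 'I_n k is Some j then 'X_(rshift n j) else 0.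

(* Defining equation number i+1 (0-based i : 'I_n), written as F = 0:
     x_1 x'_1 - 1 - alpha * x_2                 (i = 0, n >= 2)
     x_i x'_i - 1 - x_{i-1} x_{i+1}             (middle)
     x_n x'_n - 1 - x_{n-1}                     (i = n-1, n >= 2)
     x_1 x'_1 - 1 - alpha                       (n = 1)                    *)
Definition Xeq (K : nzRingType) (a : K) (n : nat) (i : 'I_n) : {mpoly K[n + n]} :=
  xvar K n i * xpvar K n i - 1
  - (if (i : nat) == 0%N then a%:MP else xvar K n i.-1)
    * (if i.+1 == n then 1 else xvar K n i.+1).

Definition onX (K L : fieldType) (f : {rmorphism K -> L}) (a : K) (n : nat)
  (v : 'I_(n + n) -> L) : Prop :=
  forall i : 'I_n, (map_mpoly f (Xeq a i)).@[v] = 0.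

Definition jacobianX (K L : fieldType) (f : {rmorphism K -> L}) (a : K) (n : nat)
  (v : 'I_(n + n) -> L) : 'M[L]_(n, n + n) :=
  \matrix_(i < n, j < n + n) (map_mpoly f (mderiv j (Xeq a i))).@[v].

(* Singular point (Jacobian criterion; X_n(alpha) has pure dimension n,
   being cut out by n equations in 2n variables). *)
Definition singularX (K L : fieldType) (f : {rmorphism K -> L}) (a : K) (n : nat)
  (v : 'I_(n + n) -> L) : Prop :=
  onX f a v /\ (\rank (jacobianX f a v) < n)%N.

Definition smoothX (K : fieldType) (a : K) (n : nat) : Prop :=
  forall (L : fieldType) (f : {rmorphism K -> L}) (v : 'I_(n + n) -> L),
    ~ singularX f a v.

(* The candidate singular point: x_i = x'_i = 0 for odd i, and
   x_i = x'_i = -(-1)^((n+i-1)/2) for even i (1-based i = k+1). *)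
Definition singPt (L : nzRingType) (n : nat) (j : 'I_(n + n)) : L :=
  let k : nat := match split j with inl k => k | inr k => k end in
  if odd k then - (-1) ^+ ((n + k)./2) else 0.

From mathcomp Require Import all_boot all_algebra.
From mathcomp Require Import mpoly.
From mathcomp Require Import ring zify.
Set Implicit Arguments. Unset Strict Implicit. Unset Printing Implicit Defensive.
Import GRing.Theory.
Local Open Scope ring_scope.

(* Put x_0 = alpha and x_{n+1} = 1, so that the equations read
   x_i x'_i - 1 = x_{i-1} x_{i+1}.  A point is singular iff some row vector
   c <> 0 kills the Jacobian, i.e. c_i x_i = 0 and
   c_i x'_i = c_{i+1} x_{i+2} + c_{i-1} x_{i-2} for all i (c_0 = c_{n+1} = 0).
   If c_i <> 0 then x_i = 0, hence x_{i-1} x_{i+1} = -1; so the support of c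
   contains no two neighbours and is closed under i -> i +- 2 inside [1, n].
   It is therefore the set of odd indices, n is odd, and x_i = x'_i = 0 for
   odd i.  The equations at odd i then say x_{i-1} x_{i+1} = -1, which
   determines the even coordinates from x_{n+1} = 1 downwards and finally
   alpha = x_0, while those at even i give x'_i = 1 / x_i.  Conversely,
   c_{2j+1} = (-1)^j is a kernel vector at the point so obtained.
   Indices here are 1-based, whereas the sequences below start at 0. *)

Definition ext0 (V : nmodType) (n : nat) (g : 'I_n -> V) (k : nat) : V :=
  if insub k is Some i then g i else 0.

Lemma ext0_ord (V : nmodType) n (g : 'I_n -> V) (i : 'I_n) : ext0 g i = g i.
Proof. by rewrite /ext0 valK. Qed.

Lemma ext0_out (V : nmodType) n (g : 'I_n -> V) k : (n <= k)%N -> ext0 g k = 0.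
Proof. by move=> le_nk; rewrite /ext0 insubN // -leqNgt. Qed.

Lemma ext0_row (V : nmodType) n (c : nat -> V) k :
  (forall k, (n <= k)%N -> c k = 0) -> ext0 ((\row_(i < n) c i) 0) k = c k.
Proof.
move=> c_out; rewrite /ext0; case: insubP => [i _ <-|]; first by rewrite mxE.
by rewrite -leqNgt => /c_out.
Qed.

Lemma ext0_mulr (R : nzSemiRingType) n (g : 'I_n -> R) (h : nat -> R) k :
  ext0 (fun i => g i * h i) k = ext0 g k * h k.
Proof. by rewrite /ext0; case: insubP => [i _ <-|_]; rewrite ?mul0r. Qed.

Lemma sum_ord_delta (R : nzSemiRingType) n (g : 'I_n -> R) k :
  \sum_(i < n) (i == k :> nat)%:R * g i = ext0 g k.
Proof.
case: (ltnP k n) => [lt_kn|le_nk]; last first.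
  rewrite ext0_out // big1 // => i _.
  by rewrite ltn_eqF ?mul0r // (leq_trans (ltn_ord i)).
rewrite (bigD1 (Ordinal lt_kn)) //= eqxx mul1r -[k]/(nat_of_ord (Ordinal lt_kn)) ext0_ord.
rewrite big1 ?addr0 // => i; rewrite -val_eqE /= => /negbTE ->; exact: mul0r.
Qed.

Lemma mderiv_X (R : nzRingType) N (i j : 'I_N) :
  mderiv j ('X_i : {mpoly R[N]}) = (i == j)%:R.
Proof.
rewrite mderivX mnm1E; case: eqP => [->|_] /=; last by rewrite scale0r.
have -> : (U_(j) - U_(j) = 0)%MM by apply/mnmP => l; rewrite mnmBE subnn mnm0E.
by rewrite scale1r mpolyX0.
Qed.

Lemma mderiv1 (R : nzRingType) N (j : 'I_N) : mderiv j (1 : {mpoly R[N]}) = 0.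
Proof. by rewrite -mpolyC1 mderivC. Qed.

Definition xprev (T : Type) (a : T) (x : nat -> T) (k : nat) : T :=
  if k == 0%N then a else x k.-1.

Definition xnext (R : nzSemiRingType) (n : nat) (x : nat -> R) (k : nat) : R :=
  if k.+1 == n then 1 else x k.+1.

Lemma xprev_eq_in (T : Type) (a : T) n (x x' : nat -> T) k :
  (forall j, (j < n)%N -> x j = x' j) -> (k <= n)%N -> xprev a x k = xprev a x' k.
Proof. by move=> eq_x; rewrite /xprev; case: k => //= k /eq_x. Qed.

Lemma xnext_eq_in (R : nzSemiRingType) n (x x' : nat -> R) k :
  (forall j, (j < n)%N -> x j = x' j) -> (k < n)%N -> xnext n x k = xnext n x' k.
Proof. by move=> eq_x lt_kn; rewrite /xnext; case: eqP => // ne_k1n; apply: eq_x; lia. Qed.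

Section Derivatives.
Variables (K : nzRingType) (n : nat) (a : K).
Implicit Types (i k : 'I_n) (m : nat).

Lemma XeqE i :
  Xeq a i = xvar K n i * xpvar K n i - 1 - xprev a%:MP (xvar K n) i * xnext n (xvar K n) i.
Proof. by []. Qed.

Lemma mderiv_xvar_l i m : mderiv (lshift n i) (xvar K n m) = (m == i)%:R.
Proof.
rewrite /xvar; case: insubP => [j _ <-|]; first by rewrite mderiv_X (inj_eq (@lshift_inj _ _)).
by rewrite mderiv0; case: eqP => // ->; rewrite ltn_ord.
Qed.

Lemma mderiv_xvar_r i m : mderiv (rshift n i) (xvar K n m) = 0.
Proof. by rewrite /xvar; case: insub => [j|]; rewrite ?mderiv_X ?eq_lrshift ?mderiv0. Qed.

Lemma mderiv_xpvar_l i m : mderiv (lshift n i) (xpvar K n m) = 0.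
Proof. by rewrite /xpvar; case: insub => [j|]; rewrite ?mderiv_X ?eq_rlshift ?mderiv0. Qed.

Lemma mderiv_xpvar_r i m : mderiv (rshift n i) (xpvar K n m) = (m == i)%:R.
Proof.
rewrite /xpvar; case: insubP => [j _ <-|]; first by rewrite mderiv_X (inj_eq (@rshift_inj _ _)).
by rewrite mderiv0; case: eqP => // ->; rewrite ltn_ord.
Qed.

Lemma mderiv_Xeq_l i k :
  mderiv (lshift n k) (Xeq a i) =
  (i == k :> nat)%:R * xpvar K n i
  - ((i == k.+1 :> nat)%:R * xnext n (xvar K n) i + xprev a%:MP (xvar K n) i * (i.+1 == k)%:R).
Proof.
rewrite XeqE !mderivB !mderivM mderiv1 mderiv_xvar_l mderiv_xpvar_l mulr0 addr0 subr0.
congr (_ - (_ * _ + _ * _)); first by case: i => -[|i] /=; rewrite ?mderivC ?mderiv_xvar_l.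
rewrite /xnext; case: eqP => [eq_i1n|_]; last exact: mderiv_xvar_l.
by rewrite mderiv1 eq_i1n gtn_eqF.
Qed.

Lemma mderiv_Xeq_r i k : mderiv (rshift n k) (Xeq a i) = (i == k :> nat)%:R * xvar K n i.
Proof.
rewrite XeqE !mderivB !mderivM mderiv1 mderiv_xvar_r mderiv_xpvar_r mul0r add0r subr0.
have -> : mderiv (rshift n k) (xprev a%:MP (xvar K n) i) = 0.
  by rewrite /xprev; case: eqP; rewrite ?mderivC ?mderiv_xvar_r.
have -> : mderiv (rshift n k) (xnext n (xvar K n) i) = 0.
  by rewrite /xnext; case: eqP; rewrite ?mderiv1 ?mderiv_xvar_r.
by rewrite mul0r mulr0 addr0 subr0; apply: commr_nat.
Qed.

End Derivatives.

Definition xcoord (V : nmodType) (n : nat) (v : 'I_(n + n) -> V) : nat -> V :=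
  ext0 (fun i => v (lshift n i)).

Definition xpcoord (V : nmodType) (n : nat) (v : 'I_(n + n) -> V) : nat -> V :=
  ext0 (fun i => v (rshift n i)).

Definition Xsystem (R : nzRingType) (a : R) (n : nat) (x y : nat -> R) : Prop :=
  forall k, (k < n)%N -> x k * y k - 1 = xprev a x k * xnext n x k.

(* [c] is a left kernel vector of the Jacobian at [(x, y)]: the last two
   clauses are the columns of [x'_k] and of [x_k]. *)
Definition Xkernel (R : nzRingType) (a : R) (n : nat) (x y c : nat -> R) : Prop :=
  [/\ forall k, (n <= k)%N -> c k = 0,
      forall k, (k < n)%N -> c k * x k = 0 &
      forall k, (k < n)%N ->
        c k * y k = c k.+1 * xnext n x k.+1 + (if k is k'.+1 then c k' * xprev a x k' else 0)].

Section Transport.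
Variables (R : nzRingType) (a : R) (n : nat) (x y x' y' c : nat -> R).
Hypothesis eq_xy : forall k, (k < n)%N -> x k = x' k /\ y k = y' k.

Let eq_x k : (k < n)%N -> x k = x' k. Proof. by case/eq_xy. Qed.

Lemma Xsystem_eq_in : Xsystem a n x' y' -> Xsystem a n x y.
Proof.
move=> sys k lt_kn; have [-> ->] := eq_xy lt_kn.
by rewrite sys // (xprev_eq_in a eq_x (ltnW lt_kn)) (xnext_eq_in eq_x lt_kn).
Qed.

Lemma Xkernel_eq_in : Xkernel a n x' y' c -> Xkernel a n x y c.
Proof.
case=> c_out cx cy; split=> // k lt_kn; first by rewrite eq_x ?cx.
rewrite (eq_xy lt_kn).2 cy //; congr (_ + _).
  by case: (ltnP k.+1 n) => [lt_k1n|le_nk1]; [rewrite (xnext_eq_in eq_x) | rewrite c_out ?mul0r].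
by case: k lt_kn => // k lt_kn; rewrite (xprev_eq_in a eq_x) //; lia.
Qed.

End Transport.

Section Jacobian.
Variables (K L : fieldType) (f : {rmorphism K -> L}) (a : K) (n : nat) (v : 'I_(n + n) -> L).
Local Notation x := (xcoord v).
Local Notation y := (xpcoord v).
Local Notation ev p := (map_mpoly f p).@[v].

Lemma eval_xvar m : ev (xvar K n m) = x m.
Proof.
by rewrite /xvar /xcoord /ext0; case: insub => [j|]; rewrite ?map_mpolyX ?mevalXU ?rmorph0.
Qed.

Lemma eval_xpvar m : ev (xpvar K n m) = y m.
Proof.
by rewrite /xpvar /xpcoord /ext0; case: insub => [j|]; rewrite ?map_mpolyX ?mevalXU ?rmorph0.
Qed.

Lemma eval_xprev m : ev (xprev a%:MP (xvar K n) m) = xprev (f a) x m.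
Proof. by rewrite /xprev; case: eqP; rewrite ?map_mpolyC ?mevalC ?eval_xvar. Qed.

Lemma eval_xnext m : ev (xnext n (xvar K n) m) = xnext n x m.
Proof. by rewrite /xnext; case: eqP; rewrite ?rmorph1 ?eval_xvar. Qed.

Lemma eval_Xeq i : ev (Xeq a i) = x i * y i - 1 - xprev (f a) x i * xnext n x i.
Proof.
by rewrite XeqE !rmorphB !rmorphM !rmorph1 /= eval_xvar eval_xpvar eval_xprev eval_xnext.
Qed.

Lemma onX_Xsystem : onX f a v <-> Xsystem (f a) n x y.
Proof.
split=> [onXv k lt_kn|sys i]; last by rewrite eval_Xeq sys ?subrr.
by apply/eqP; rewrite -subr_eq0 -[k]/(nat_of_ord (Ordinal lt_kn)) -eval_Xeq onXv.
Qed.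

Lemma jacobianX_l i k :
  jacobianX f a v i (lshift n k) =
  (i == k :> nat)%:R * y i
  - ((i == k.+1 :> nat)%:R * xnext n x i + xprev (f a) x i * (i.+1 == k)%:R).
Proof.
rewrite mxE mderiv_Xeq_l !rmorphB !rmorphD !rmorphM !rmorph_nat /=.
by rewrite eval_xpvar eval_xprev eval_xnext.
Qed.

Lemma jacobianX_r i k : jacobianX f a v i (rshift n k) = (i == k :> nat)%:R * x i.
Proof. by rewrite mxE mderiv_Xeq_r !rmorphM !rmorph_nat /= eval_xvar. Qed.

Lemma jacobianX_col_r (c : 'rV[L]_n) k : (c *m jacobianX f a v) 0 (rshift n k) = c 0 k * x k.
Proof.
rewrite mxE -ext0_ord -(ext0_mulr (c 0) x) -sum_ord_delta; apply: eq_bigr => i _.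
by rewrite jacobianX_r mulrCA.
Qed.

Lemma jacobianX_col_l (c : 'rV[L]_n) k (c' := ext0 (c 0)) :
  (c *m jacobianX f a v) 0 (lshift n k) =
  c' k * y k
  - (c' k.+1 * xnext n x k.+1 + if k : nat is k'.+1 then c' k' * xprev (f a) x k' else 0).
Proof.
have entry i : c 0 i * jacobianX f a v i (lshift n k) =
    (i == k :> nat)%:R * (c 0 i * y i)
    - ((i == k.+1 :> nat)%:R * (c 0 i * xnext n x i)
       + if k : nat is k'.+1 then (i == k' :> nat)%:R * (c 0 i * xprev (f a) x i) else 0).
  by rewrite jacobianX_l; case: (k : nat) => [|k'] /=; ring.
rewrite mxE (eq_bigr _ (fun i _ => entry i)) sumrB big_split /= !sum_ord_delta !ext0_mulr.
by case: (k : nat) => [|k'] /=; rewrite ?big1_eq ?sum_ord_delta ?ext0_mulr.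
Qed.

End Jacobian.

Lemma rank_ltP (F : fieldType) m N (A : 'M[F]_(m, N)) :
  reflect (exists2 c : 'rV_m, c != 0 & c *m A = 0) (\rank A < m)%N.
Proof.
rewrite ltn_neqAle rank_leq_row andbT -[_ != m]/(~~ row_free A) -kermx_eq0.
apply: (iffP (@rowV0Pn F m m (kermx A))) => -[c].
  by move=> /sub_kermxP cA nz; exists c.
by move=> nz /sub_kermxP cA; exists c.
Qed.

Lemma singularX_Xkernel (K L : fieldType) (f : {rmorphism K -> L}) (a : K) n
    (v : 'I_(n + n) -> L) (x := xcoord v) (y := xpcoord v) :
  singularX f a v <->
  Xsystem (f a) n x y /\ exists2 c : nat -> L, (exists k, c k != 0) & Xkernel (f a) n x y c.
Proof.
rewrite /singularX onX_Xsystem; split=> -[sys kerJ]; split=> //.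
  have [c /rV0Pn[i ci] cJ] := rank_ltP _ kerJ.
  exists (ext0 (c 0)); first by exists i; rewrite ext0_ord.
  split=> [k|k lt_kn|k lt_kn]; first exact: ext0_out.
    have := jacobianX_col_r f a v c (Ordinal lt_kn).
    by rewrite cJ mxE -(ext0_ord (c 0)) => /esym.
  apply/eqP; rewrite -subr_eq0; have := jacobianX_col_l f a v c (Ordinal lt_kn).
  by rewrite cJ mxE => /esym/eqP.
case: kerJ => c [k ck] [c_out cx cy]; apply/rank_ltP; exists (\row_(i < n) c i).
  have lt_kn : (k < n)%N by rewrite ltnNge; apply: contra ck => /c_out ->.
  by apply/rV0Pn; exists (Ordinal lt_kn); rewrite mxE.
apply/rowP => j; rewrite [RHS]mxE; case: (split_ordP j) => i ->.
  have := cy _ (ltn_ord i); rewrite jacobianX_col_l.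
  by case: (nat_of_ord i) => [|i'] cyi; rewrite !ext0_row // cyi subrr.
by rewrite jacobianX_col_r mxE cx.
Qed.

Section XsystemFacts.
Variables (R : nzRingType) (a : R) (n : nat) (x y : nat -> R).
Hypothesis sys : Xsystem a n x y.

Lemma Xsystem_prev_next k : (k < n)%N -> x k = 0 -> xprev a x k * xnext n x k = -1.
Proof. by move=> lt_kn xk0; rewrite -sys // xk0 mul0r sub0r. Qed.

Lemma Xsystem_mul1 k : (0 < k < n)%N -> x k.-1 = 0 -> x k * y k = 1.
Proof.
case/andP=> lt0k lt_kn xk0; apply/eqP; rewrite -subr_eq0 sys //.
by rewrite /xprev gtn_eqF // xk0 mul0r.
Qed.

End XsystemFacts.

Section KernelSupport.
Variables (R : idomainType) (a : R) (n : nat) (x y c : nat -> R).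
Hypotheses (sys : Xsystem a n x y) (ker : Xkernel a n x y c).

Lemma kernel_support k :
  c k != 0 -> [/\ (k < n)%N, x k = 0 & xprev a x k * xnext n x k = -1].
Proof.
case: ker => c_out cx _ ck.
have lt_kn : (k < n)%N by rewrite ltnNge; apply: contra ck => /c_out ->.
have /eqP := cx k lt_kn; rewrite mulf_eq0 (negbTE ck) => /eqP xk0.
by split=> //; exact: (Xsystem_prev_next sys lt_kn xk0).
Qed.

Lemma kernel_factors_neq0 k : c k != 0 -> xprev a x k != 0 /\ xnext n x k != 0.
Proof.
by case/kernel_support=> _ _ PQ; apply/andP; rewrite -negb_or -mulf_eq0 PQ oppr_eq0 oner_eq0.
Qed.

Lemma kernel_succ0 k : c k != 0 -> c k.+1 = 0.
Proof.
move=> ck; apply/eqP; apply: contraT => ck1.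
have [lt_k1n xk1 _] := kernel_support ck1.
by have [_] := kernel_factors_neq0 ck; rewrite /xnext ltn_eqF // xk1 eqxx.
Qed.

Lemma kernel_pred0 k : c k.+1 != 0 -> c k = 0.
Proof.
move=> ck1; apply/eqP; apply: contraT => ck.
have [_ xk _] := kernel_support ck.
by have [] := kernel_factors_neq0 ck1; rewrite /xprev /= xk eqxx.
Qed.

Lemma kernel_y0 k : c k != 0 -> y k = 0.
Proof.
move=> ck; have [lt_kn _ _] := kernel_support ck; case: ker => _ _ cy.
have := cy k lt_kn; rewrite kernel_succ0 // mul0r add0r.
have -> : (if k is k'.+1 then c k' * xprev a x k' else 0) = 0.
  by case: k ck {lt_kn} => // k ck; rewrite kernel_pred0 ?mul0r.
by move/eqP; rewrite mulf_eq0 (negbTE ck) => /eqP.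
Qed.

Lemma kernel_up k : c k != 0 -> (k.+1 < n)%N -> c k.+2 != 0.
Proof.
move=> ck lt_k1n; have [Pk _] := kernel_factors_neq0 ck; case: ker => _ _ cy.
apply/eqP => ck2; have := cy k.+1 lt_k1n.
rewrite kernel_succ0 // ck2 !mul0r add0r => /esym/eqP.
by rewrite mulf_eq0 (negbTE ck) (negbTE Pk).
Qed.

Lemma kernel_down k : c k.+1 != 0 -> exists2 k', k = k'.+1 & c k' != 0.
Proof.
move=> ck1; have [lt_k1n _ _] := kernel_support ck1; have [_ Qk1] := kernel_factors_neq0 ck1.
case: ker => _ _ cy; have := cy k (ltnW lt_k1n).
rewrite kernel_pred0 // mul0r => /esym/eqP.
case: k {lt_k1n} ck1 Qk1 => [|k] ck1 Qk1.
  by rewrite addr0 mulf_eq0 (negbTE ck1) (negbTE Qk1).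
have [->|ck] := eqVneq (c k) 0; last by exists k.
by rewrite mul0r addr0 mulf_eq0 (negbTE ck1) (negbTE Qk1).
Qed.

Lemma kernel_head k : c k != 0 -> c 0 != 0.
Proof.
elim/ltn_ind: k => -[//|k] IH /kernel_down[k' eq_k ck'].
by apply: (IH k') => //; rewrite eq_k.
Qed.

Lemma kernel_even q : c 0 != 0 -> (q.*2 < n)%N -> c q.*2 != 0.
Proof. by move=> c0; elim: q => [//|q IH] lt_qn; apply: kernel_up (IH _) _; lia. Qed.

End KernelSupport.

Variant parity_spec (k : nat) : bool -> Type :=
  | EvenIndex q of k = q.*2 : parity_spec k false
  | OddIndex q of k = q.*2.+1 : parity_spec k true.

Lemma parityP k : parity_spec k (odd k).
Proof.
have := odd_double_half k; case: (odd k) => def_k.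
  exact: (@OddIndex k k./2 (esym def_k)).
exact: (@EvenIndex k k./2 (esym def_k)).
Qed.

Lemma kernel_even_coords (R : idomainType) (a : R) n (x y c : nat -> R) :
  Xsystem a n x y -> Xkernel a n x y c -> (exists k, c k != 0) ->
  odd n /\ forall k, (k < n)%N -> ~~ odd k -> x k = 0 /\ y k = 0.
Proof.
move=> sys ker [k /(kernel_head sys ker) c0].
have [lt0n _ _] := kernel_support sys ker c0; have [c_out _ _] := ker.
split=> [|j lt_jn].
  case: (parityP n) lt0n => // -[|q] def_n; first by rewrite def_n.
  have [lt_qn lt_q1n] : (q.*2 < n)%N /\ (q.*2.+1 < n)%N by lia.
  have /negP[] := kernel_up sys ker (kernel_even sys ker c0 lt_qn) lt_q1n.
  by rewrite c_out //; lia.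
case: (parityP j) lt_jn => // q -> lt_qn _.
have cq := kernel_even sys ker c0 lt_qn.
by have [_ -> _] := kernel_support sys ker cq; rewrite (kernel_y0 sys ker cq).
Qed.

Lemma mulr_eqN1_inj (R : idomainType) (z z' w : R) : z * w = -1 -> z' * w = -1 -> z = z'.
Proof.
move=> zw z'w; have w_neq0 : w != 0.
  by apply: contra_eqN zw => /eqP ->; rewrite mulr0 eq_sym oppr_eq0 oner_eq0.
by apply: (mulIf w_neq0); rewrite zw z'w.
Qed.

Section EvenVanishingSolutions.
Variables (R : idomainType) (n : nat) (a b : R) (x y x' y' : nat -> R).
Hypotheses (odd_n : odd n) (sys : Xsystem a n x y) (sys' : Xsystem b n x' y').
Hypotheses (even0 : forall k, (k < n)%N -> ~~ odd k -> x k = 0 /\ y k = 0)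
           (even0' : forall k, (k < n)%N -> ~~ odd k -> x' k = 0 /\ y' k = 0).

(* Downward induction: the equation at the even index [k.+1] reads
   [x k * xnext n x k.+1 = -1]. *)
Lemma odd_coords_eq k : odd k -> (k < n)%N -> x k = x' k.
Proof.
suff coords_eq_upto d : forall k, odd k -> (k < n)%N -> (n <= k + d)%N -> x k = x' k.
  by move=> odd_k lt_kn; apply: (coords_eq_upto n) => //; apply: leq_addl.
elim: d => [|d IH] {}k odd_k lt_kn le_nkd; first by rewrite addn0 leqNgt lt_kn in le_nkd.
have lt_k1n : (k.+1 < n)%N.
  by rewrite ltn_neqAle lt_kn andbT; apply: contraTneq odd_n => <-; rewrite /= odd_k.
have ev_k1 : ~~ odd k.+1 by rewrite /= odd_k.
have next_eq : xnext n x k.+1 = xnext n x' k.+1.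
  by rewrite /xnext; case: eqP => // ne_k2n; apply: IH => //; lia.
apply: mulr_eqN1_inj (Xsystem_prev_next sys lt_k1n (even0 lt_k1n ev_k1).1) _.
by rewrite next_eq (Xsystem_prev_next sys' lt_k1n (even0' lt_k1n ev_k1).1).
Qed.

Lemma coords_eq k : (k < n)%N -> x k = x' k.
Proof.
move=> lt_kn; have [odd_k|ev_k] := boolP (odd k); first exact: odd_coords_eq.
by rewrite (even0 lt_kn ev_k).1 (even0' lt_kn ev_k).1.
Qed.

Lemma Xsystem_even0_unique : a = b /\ forall k, (k < n)%N -> x k = x' k /\ y k = y' k.
Proof.
have lt0n := odd_gt0 odd_n.
split=> [|k lt_kn].
  apply: mulr_eqN1_inj (Xsystem_prev_next sys lt0n (even0 lt0n isT).1) _.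
  by rewrite (xnext_eq_in coords_eq lt0n) (Xsystem_prev_next sys' lt0n (even0' lt0n isT).1).
split; first exact: coords_eq.
case: (parityP k) lt_kn => q -> lt_kn.
  by rewrite (even0 lt_kn _).2 ?(even0' lt_kn _).2 ?odd_double.
have lt_qn : (q.*2 < n)%N by apply: ltnW.
have ev_q : ~~ odd q.*2 by rewrite odd_double.
have lt0_kn : (0 < q.*2.+1 < n)%N by [].
have xy1 := Xsystem_mul1 sys lt0_kn (even0 lt_qn ev_q).1.
have x'y'1 := Xsystem_mul1 sys' lt0_kn (even0' lt_qn ev_q).1.
have xq_neq0 : x q.*2.+1 != 0 by apply: contra_eqN xy1 => /eqP ->; rewrite mul0r eq_sym oner_eq0.
by apply: (mulfI xq_neq0); rewrite xy1 coords_eq // x'y'1.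
Qed.

End EvenVanishingSolutions.

Definition singSeq (R : nzRingType) (n k : nat) : R :=
  if odd k then - (-1) ^+ ((n + k)./2) else 0.

Definition kerSeq (R : nzRingType) (n k : nat) : R :=
  if (k < n)%N && ~~ odd k then (-1) ^+ k./2 else 0.

Section SingularSolution.
Variables (R : comNzRingType) (p : nat).
Local Notation n := p.*2.+1.
Local Notation s := (singSeq R n).

Lemma singSeq_even q : s q.*2 = 0.
Proof. by rewrite /singSeq odd_double. Qed.

Lemma singSeq_odd q : s q.*2.+1 = (-1) ^+ (p + q).
Proof.
rewrite /singSeq oddS odd_double addSn addnS -doubleD -doubleS doubleK /=.
by rewrite exprS mulN1r opprK.
Qed.

Lemma xnext_singSeq_even q : xnext n s q.*2 = (-1) ^+ (p + q).
Proof.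
rewrite /xnext eqSS (inj_eq double_inj) singSeq_odd.
by case: eqP => // ->; rewrite addnn -mul2n mulnC exprM sqrr_sign.
Qed.

Lemma xprev_singSeq_even q : xprev ((-1) ^+ p.+1) s q.*2 = - (-1) ^+ (p + q).
Proof.
case: q => [|q]; first by rewrite addn0 exprS mulN1r.
by rewrite /xprev doubleS /= singSeq_odd addnS exprS mulN1r opprK.
Qed.

Lemma kerSeq_even q : (q.*2 < n)%N -> kerSeq R n q.*2 = (-1) ^+ q.
Proof. by move=> lt_qn; rewrite /kerSeq lt_qn odd_double doubleK. Qed.

Lemma kerSeq_odd q : kerSeq R n q.*2.+1 = 0.
Proof. by rewrite /kerSeq oddS odd_double andbF. Qed.

End SingularSolution.

Lemma singSeq_Xsystem (R : comNzRingType) n :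
  odd n -> Xsystem ((-1) ^+ ((n + 1)./2)) n (singSeq R n) (singSeq R n).
Proof.
case: (parityP n) => // p -> _ k _; rewrite addn1 -doubleS doubleK.
case: (parityP k) => q ->.
  by rewrite xprev_singSeq_even xnext_singSeq_even singSeq_even mul0r mulNr -expr2 sqrr_sign sub0r.
by rewrite singSeq_odd -expr2 sqrr_sign subrr /xprev /= singSeq_even mul0r.
Qed.

Lemma singSeq_Xkernel (R : comNzRingType) n :
  odd n -> Xkernel ((-1) ^+ ((n + 1)./2)) n (singSeq R n) (singSeq R n) (kerSeq R n).
Proof.
case: (parityP n) => // p -> _; rewrite addn1 -doubleS doubleK.
split=> [k le_nk|k _|k lt_kn]; first by rewrite /kerSeq ltnNge le_nk.
  by case: (parityP k) => q ->; rewrite ?singSeq_even ?kerSeq_odd ?mulr0 ?mul0r.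
case: (parityP k) lt_kn => q -> lt_kn.
  rewrite singSeq_even mulr0 kerSeq_odd mul0r add0r.
  by case: q {lt_kn} => [|q] //; rewrite doubleS kerSeq_odd mul0r.
rewrite singSeq_odd kerSeq_odd mul0r -doubleS kerSeq_even; last by lia.
rewrite xnext_singSeq_even kerSeq_even ?xprev_singSeq_even; last by lia.
by rewrite addnS !exprS; ring.
Qed.

Lemma singPt_lshift (L : nzRingType) n (k : 'I_n) : singPt L (lshift n k) = singSeq L n k.
Proof. by rewrite /singPt (unsplitK (inl k)). Qed.

Lemma singPt_rshift (L : nzRingType) n (k : 'I_n) : singPt L (rshift n k) = singSeq L n k.
Proof. by rewrite /singPt (unsplitK (inr k)). Qed.

Lemma singPt_coords (L : nzRingType) n (v : 'I_(n + n) -> L) :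
  v =1 @singPt L n <->
  forall k, (k < n)%N -> xcoord v k = singSeq L n k /\ xpcoord v k = singSeq L n k.
Proof.
split=> [eq_v k lt_kn|eq_s j].
  rewrite -[k]/(nat_of_ord (Ordinal lt_kn)) /xcoord /xpcoord !ext0_ord.
  by rewrite !eq_v singPt_lshift singPt_rshift.
case: (split_ordP j) => k ->.
  by rewrite singPt_lshift -(eq_s _ (ltn_ord k)).1 /xcoord ext0_ord.
by rewrite singPt_rshift -(eq_s _ (ltn_ord k)).2 /xpcoord ext0_ord.
Qed.

Section SingularPoints.
Variables (K L : fieldType) (f : {rmorphism K -> L}) (a : K) (n : nat) (v : 'I_(n + n) -> L).
Local Notation x := (xcoord v).
Local Notation y := (xpcoord v).
Local Notation s := (singSeq L n).

Lemma singularX_shape :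
  singularX f a v ->
  [/\ odd n, f a = (-1) ^+ ((n + 1)./2) & forall k, (k < n)%N -> x k = s k /\ y k = s k].
Proof.
case/singularX_Xkernel=> sys [c nz ker].
have [odd_n even0] := kernel_even_coords sys ker nz.
have s_even0 k : (k < n)%N -> ~~ odd k -> s k = 0 /\ s k = 0 by rewrite /singSeq => _ /negbTE ->.
by have [] := Xsystem_even0_unique odd_n sys (singSeq_Xsystem L odd_n) even0 s_even0.
Qed.

Lemma singularX_singSeq :
  odd n -> f a = (-1) ^+ ((n + 1)./2) -> (forall k, (k < n)%N -> x k = s k /\ y k = s k) ->
  singularX f a v.
Proof.
move=> odd_n fa eq_xy; apply/singularX_Xkernel; rewrite fa.
split; first exact: Xsystem_eq_in eq_xy (singSeq_Xsystem L odd_n).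
exists (kerSeq L n); last exact: Xkernel_eq_in eq_xy (singSeq_Xkernel L odd_n).
by exists 0%N; rewrite /kerSeq odd_gt0 // expr0 oner_neq0.
Qed.

End SingularPoints.

Unset Implicit Arguments.

Theorem mainTheorem14 (K : fieldType) (a : K) (n : nat) (ha : a != 0) :
  (~~ odd n -> smoothX a n) /\
  (odd n -> a != (-1) ^+ ((n + 1)./2) -> smoothX a n) /\
  (odd n -> a = (-1) ^+ ((n + 1)./2) ->
     forall (L : fieldType) (f : {rmorphism K -> L}) (v : 'I_(n + n) -> L),
       singularX f a v <-> v =1 @singPt L n).
Proof.
split; [|split].
- by move=> ev_n L f v /singularX_shape[odd_n]; rewrite odd_n in ev_n.
- move=> _ a_neq L f v /singularX_shape[_ fa _]; move: a_neq.
  by rewrite -(inj_eq (fmorph_inj f)) fa rmorphXn rmorphN1 eqxx.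
move=> odd_n a_sign L f v; rewrite singPt_coords.
split=> [/singularX_shape[] // | eq_xy]; apply: singularX_singSeq => //.
by rewrite a_sign rmorphXn rmorphN1.
Qed.
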